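(* Let $M$ be an orientable connected combinatorial $3$-manifold with vertex set $V$, let $V=V_1\,\dot\cup\, V_2$ be a partition of $V$, and let $n\in\mathbb{N}$ with $|V|\in\{2n,2n+1\}$. Suppose the slicing $S_{(V_1,V_2)}$ is connected. Then \[ g(S_{(V_1,V_2)})\le \binom{n-1}{2}, \] where $g$ denotes the genus.
   Context: A combinatorial $3$-manifold is a finite pure $3$-dimensional simplicial complex in which the link of every vertex is a combinatorial $2$-sphere. A function $f:M\to\mathbb{R}$ is regular simplexwise linear (rsl) if it is linear on every simplex of $M$ and takes pairwise distinct values on the vertices. Given a partition $V=V_1\dot\cup V_2$ of the vertex set into two nonempty sets, choose an rsl-function $f$ with $f(v)<f(w)$ for all $v\in V_1$, $w\in V_2$, and a number $x_0$ with $f(v)<x_0<f(w)$ for all such $v,w$; the slicing $S_{(V_1,V_2)}$ is the level set $f^{-1}(x_0)$, a polyhedral surface (made of triangles and quadrilaterals, one per tetrahedron meeting both $V_1$ and $V_2$) which separates $M$ into the part containing $V_1$ and the part containing $V_2$; its combinatorial type depends only on the partition. *)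

(* Simplicial complexes on a finite vertex type V are given
   by their sets of facets (sets of vertices). *)
From mathcomp Require Import all_boot all_order all_algebra.
Set Implicit Arguments.
Unset Strict Implicit.
Unset Printing Implicit Defensive.
Import Order.TTheory GRing.Theory Num.Theory.

Section Complexes.
Variable V : finType.
Implicit Types (K M : {set {set V}}).

(* the faces with exactly k vertices (i.e. of dimension k-1) of the complex
   with facet set K *)
Definition kfaces K (k : nat) : {set {set V}} :=
  [set s : {set V} | (#|s| == k) && [exists F in K, s \subset F]].

Definition vertices K : {set V} := [set v | [exists F in K, v \in F]].

Definition skel K : rel V := fun u w => [exists F in K, (u \in F) && (w \in F)].

Definition complex_connected K : Prop :=
  forall u w, u \in vertices K -> w \in vertices K -> connect (skel K) u w.

Definition vlink K (v : V) : {set {set V}} := [set F :\ v | F in K & v \in F].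

Definition euler2 K : int :=
  ((Posz #|kfaces K 1|) - (Posz #|kfaces K 2|) + (Posz #|kfaces K 3|))%R.

(* combinatorial 2-sphere: a pure 2-dimensional complex which is a closed
   combinatorial surface (every edge in exactly two triangles, every vertex
   link a single cycle), connected, with Euler characteristic 2 *)
Definition comb_2sphere K : Prop :=
  [/\ forall F, F \in K -> #|F| = 3,
      forall e, e \in kfaces K 2 -> #|[set F in K | e \subset F]| = 2,
      forall v, v \in vertices K -> complex_connected (vlink K v),
      complex_connected K &
      euler2 K = (Posz 2)].

Definition comb_3manifold M : Prop :=
  [/\ M != set0,
      forall F, F \in M -> #|F| = 4 &
      forall v, v \in vertices M -> comb_2sphere (vlink M v)].

Definition pos (F : {set V}) (v : V) : nat :=
  #|[set x in F | (enum_rank x < enum_rank v)%N]|.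

(* orientability: each tetrahedron gets an orientation sign s F relative to
   the sorted order of its vertices; the face opposite to vertex a of F
   inherits the sign s F * (-1)^(pos F a); adjacent tetrahedra must induce
   opposite orientations on their common triangle. *)
Definition orientable M : Prop :=
  exists s : {set V} -> bool,
    forall F1 F2 a b, F1 \in M -> F2 \in M ->
      a \in F1 -> a \notin F2 -> b \in F2 -> b \notin F1 ->
      F1 :\ a = F2 :\ b ->
      (s F1 (+) odd (pos F1 a)) != (s F2 (+) odd (pos F2 b)).

Definition mixed (V1 : {set V}) (s : {set V}) : bool := (s :&: V1 != set0) && (s :\: V1 != set0).

(* cells of the slicing S_(V1, V \ V1):
   vertices  = edges of M meeting both sides,
   edges     = triangles of M meeting both sides,
   faces     = tetrahedra of M meeting both sides (triangles / quadrilaterals) *)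
Definition sl_vertices M (V1 : {set V}) := [set e in kfaces M 2 | mixed V1 e].
Definition sl_edges M (V1 : {set V}) := [set t in kfaces M 3 | mixed V1 t].
Definition sl_faces M (V1 : {set V}) := [set F in M | mixed V1 F].

Definition slicing_euler M (V1 : {set V}) : int :=
  ((Posz #|sl_vertices M V1|) - (Posz #|sl_edges M V1|) + (Posz #|sl_faces M V1|))%R.

Definition sl_adj M (V1 : {set V}) : rel {set V} := fun e f =>
  [&& e \in sl_vertices M V1, f \in sl_vertices M V1 &
      [exists t in sl_edges M V1, (e \subset t) && (f \subset t)]].

Definition slicing_connected M (V1 : {set V}) : Prop :=
  forall e f, e \in sl_vertices M V1 -> f \in sl_vertices M V1 ->
    connect (sl_adj M V1) e f.

Definition slicing_genus M (V1 : {set V}) : rat :=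
  ((2%:Q - (slicing_euler M V1)%:~R) / 2%:Q)%R.

End Complexes.

From mathcomp Require Import all_boot all_order all_algebra.
From mathcomp Require Import zify lra.
Set Implicit Arguments.
Unset Strict Implicit.
Unset Printing Implicit Defensive.
Import Order.TTheory GRing.Theory Num.Theory.

(* Let k = #|V1| and let w j i be the number of faces of M with j vertices,
   exactly i of which lie in V1.  The Euler relation of the link of each
   v in V1 (a 2-sphere), summed over V1, together with the fact that every
   triangle lies in exactly two tetrahedra, gives
     chi(S) = 2k - 2 w 2 2 + w 4 3 + 2 w 4 4 >= 2k - 2 'C(k, 2),
   i.e. g(S) <= 'C(k - 1, 2).  Since S_(V1,V2) = S_(V2,V1), we may take
   k = min(|V1|, |V2|) <= n.  (w is [nkfaces] below.) *)

Lemma card_setId_sum (T : finType) (A : {set T}) (P : pred T) :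
  #|[set x in A | P x]| = \sum_(x in A) (P x : nat).
Proof.
rewrite -sum1_card (eq_bigl (fun x => (x \in A) && P x)); last by move=> x; rewrite inE.
by rewrite big_mkcondr; apply: eq_bigr => x _; case: (P x).
Qed.

Lemma sum_fibres_ord (T : finType) (A : {set T}) (w : T -> nat) (g : nat -> nat) N :
  (forall x, x \in A -> w x < N) ->
  \sum_(x in A) g (w x) = \sum_(i < N) g i * #|[set x in A | w x == i]|.
Proof.
move=> ltwN.
rewrite [RHS](eq_bigr (fun i : 'I_N => \sum_(x in A) g i * (w x == i))); last first.
  by move=> i _; rewrite card_setId_sum big_distrr.
rewrite exchange_big /=; apply: eq_bigr => x Ax.
rewrite (bigD1 (Ordinal (ltwN x Ax))) //= eqxx muln1 big1 ?addn0 //.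
by move=> i /negbTE; rewrite -val_eqE /= eq_sym => ->; rewrite muln0.
Qed.

Section Counting.
Variable T : finType.
Implicit Types (B F s : {set T}).

Lemma sum_card_incident (S : {set {set T}}) B :
  \sum_(v in B) #|[set s in S | v \in s]| = \sum_(s in S) #|s :&: B|.
Proof.
rewrite (eq_bigr (fun v => \sum_(s in S) (v \in s : nat))); last first.
  by move=> v _; rewrite (card_setId_sum S (fun s => v \in s)).
rewrite exchange_big /=; apply: eq_bigr => s _.
rewrite setIC (_ : B :&: s = [set v in B | v \in s]) ?(card_setId_sum B (mem s)) //.
Qed.

Lemma setD1_inj v F1 F2 : v \in F1 -> v \in F2 -> F1 :\ v = F2 :\ v -> F1 = F2.
Proof. by move=> v1 v2 e; rewrite -(setD1K v1) -(setD1K v2) e. Qed.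

Lemma setD1_inj_in F : {in F &, injective (fun x => F :\ x)}.
Proof.
move=> x y _ yF e; apply/eqP; apply: contraT => nxy.
have : y \in F :\ x by rewrite !inE yF eq_sym nxy.
by rewrite e !inE eqxx.
Qed.

Lemma card_setD1I F B x : x \in F ->
  #|(F :\ x) :&: B| = #|F :&: B| - (x \in B).
Proof.
move=> xF; rewrite (cardsD1 x (F :&: B)) !inE xF /=.
have -> : (F :\ x) :&: B = (F :&: B) :\ x.
  by apply/setP => y; rewrite !inE; case: (y == x); rewrite ?andbF.
by case: (x \in B) => /=; rewrite ?addKn ?add0n ?subn0.
Qed.

Lemma card_setD1I_eq F B i :
  #|[set x in F | #|(F :\ x) :&: B| == i]| =
  #|F :&: B| * (#|F :&: B|.-1 == i) + (#|F| - #|F :&: B|) * (#|F :&: B| == i).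
Proof.
rewrite card_setId_sum.
rewrite (eq_bigr (fun x => (x \in B) * (#|F :&: B|.-1 == i)
                           + (x \notin B) * (#|F :&: B| == i))); last first.
  move=> x xF; rewrite card_setD1I //.
  by case: (x \in B) => /=; rewrite ?subn1 ?subn0 ?mul1n ?mul0n ?addn0.
rewrite big_split /= -!big_distrl /= -!card_setId_sum.
have -> : [set x in F | x \in B] = F :&: B by apply/setP => x; rewrite !inE.
have -> : [set x in F | x \notin B] = F :\: B by apply/setP => x; rewrite !inE andbC.
by rewrite cardsD.
Qed.

Lemma mixedE B s j : #|s| = j -> mixed B s = (0 < #|s :&: B| < j).
Proof. by move=> cs; rewrite /mixed -!card_gt0 cardsD cs subn_gt0. Qed.

Lemma mixed_setC B s : mixed (~: B) s = mixed B s.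
Proof. by rewrite /mixed setDE setCK -setDE andbC. Qed.

End Counting.

Section Manifold.
Variables (V : finType) (M : {set {set V}}).

Lemma kfaces_card j s : s \in kfaces M j -> #|s| = j.
Proof. by rewrite inE => /andP[/eqP]. Qed.

Lemma kfaces_pure k : (forall F, F \in M -> #|F| = k) -> kfaces M k = M.
Proof.
move=> pureM; apply/setP => s; rewrite inE; apply/idP/idP.
  case/andP => /eqP cs /existsP[F /andP[FM sF]].
  suff /eqP -> : s == F by [].
  by rewrite eqEcard sF cs pureM ?leqnn.
by move=> sM; rewrite pureM // eqxx /=; apply/existsP; exists s; rewrite sM subxx.
Qed.

Lemma mem_vlink v F : F \in M -> v \in F -> F :\ v \in vlink M v.
Proof. by move=> FM vF; apply/imsetP; exists F => //; rewrite inE FM. Qed.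

Lemma vlinkP v G :
  G \in vlink M v -> exists2 F, F \in M & v \in F /\ G = F :\ v.
Proof. by case/imsetP => F; rewrite inE => /andP[FM vF] ->; exists F. Qed.

Lemma kfaces_vlink v j :
  kfaces (vlink M v) j = [set s :\ v | s in [set s in kfaces M j.+1 | v \in s]].
Proof.
apply/setP => s; apply/idP/idP.
  rewrite inE => /andP[/eqP cs /existsP[G /andP[GL sG]]].
  case: (vlinkP GL) => F FM [vF eG]; subst G.
  have vs : v \notin s by apply/negP => /(subsetP sG); rewrite !inE eqxx.
  apply/imsetP; exists (v |: s); last by rewrite setU1K.
  rewrite inE setU11 andbT inE cardsU1 vs cs eqxx /=.
  apply/existsP; exists F; rewrite FM /=.
  by rewrite subUset sub1set vF (subset_trans sG) // subD1set.
case/imsetP => t; rewrite !inE => /andP[/andP[/eqP ct /existsP[F /andP[FM tF]]] vt] ->.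
have -> : #|t :\ v| = j by move: ct; rewrite (cardsD1 v t) vt add1n => -[].
rewrite eqxx /=; apply/existsP; exists (F :\ v).
by rewrite mem_vlink ?(subsetP tF) // setSD.
Qed.

Lemma card_kfaces_vlink v j :
  #|kfaces (vlink M v) j| = #|[set s in kfaces M j.+1 | v \in s]|.
Proof.
rewrite kfaces_vlink card_in_imset // => s t; rewrite !inE => /andP[_ vs] /andP[_ vt].
exact: setD1_inj.
Qed.

Section CombinatorialManifold.
Hypothesis manM : comb_3manifold M.

Lemma comb_3manifold_pure F : F \in M -> #|F| = 4.
Proof. by case: manM => _ pureM _; apply: pureM. Qed.

Lemma card_tetrahedra_on_triangle t :
  t \in kfaces M 3 -> #|[set F in M | t \subset F]| = 2.
Proof.
move=> tK; have := tK; rewrite inE => /andP[/eqP ct /existsP[F0 /andP[F0M tF0]]].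
have [v vt] : exists v, v \in t by apply/set0Pn; rewrite -card_gt0 ct.
have vM : v \in vertices M.
  by rewrite inE; apply/existsP; exists F0; rewrite F0M (subsetP tF0).
case: manM => _ _ /(_ v vM) [_ edge2 _ _ _].
have eK : t :\ v \in kfaces (vlink M v) 2.
  by rewrite kfaces_vlink; apply: imset_f; rewrite inE tK vt.
rewrite -(edge2 _ eK).
have -> : [set G in vlink M v | t :\ v \subset G]
          = [set F :\ v | F in [set F in M | t \subset F]].
  apply/setP => G; apply/idP/idP.
    rewrite inE => /andP[GL tG]; case: (vlinkP GL) => F FM [vF eG]; subst G.
    apply: imset_f; rewrite inE FM /=.
    by rewrite -(setD1K vt) subUset sub1set vF (subset_trans tG) // subD1set.
  case/imsetP => F /[!inE] /andP[FM tF] ->.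
  by rewrite mem_vlink ?(subsetP tF) // setSD.
apply/esym/card_in_imset => F1 F2; rewrite !inE => /andP[_ t1] /andP[_ t2].
exact: setD1_inj (subsetP t1 v vt) (subsetP t2 v vt).
Qed.

(* f0 - f1 + f2 = 2 for the link of v, whose i-faces are the (i+1)-faces
   of M through v *)
Lemma vlink_euler_relation v : v \in vertices M ->
  #|[set s in kfaces M 2 | v \in s]| + #|[set s in kfaces M 4 | v \in s]| =
  2 + #|[set s in kfaces M 3 | v \in s]|.
Proof.
case: manM => _ _ /[apply] [[_ _ _ _]].
by rewrite /euler2 !card_kfaces_vlink; lia.
Qed.

Lemma triangles_of_tetrahedron (P : pred {set V}) F : F \in M ->
  [set t in kfaces M 3 | P t && (t \subset F)]
  = [set F :\ x | x in [set x in F | P (F :\ x)]].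
Proof.
move=> FM; have c4 := comb_3manifold_pure FM.
have c3 x : x \in F -> #|F :\ x| = 3.
  by move=> xF; move: c4; rewrite (cardsD1 x F) xF add1n => -[].
apply/setP => t; apply/idP/idP.
  rewrite inE => /andP[tK /andP[Pt tF]]; have ct := kfaces_card tK.
  have [x /setDP[xF xt]] : exists x, x \in F :\: t.
    by apply/set0Pn; rewrite -card_gt0 cardsD (setIidPr tF) ct c4.
  have et : t = F :\ x.
    apply/eqP; rewrite eqEcard c3 // ct leqnn andbT.
    by apply/subsetP => y yt; rewrite !inE (subsetP tF) // andbT; apply: contraNneq xt => <-.
  by apply/imsetP; exists x => //; rewrite inE xF -et.
case/imsetP => x /[!inE] /andP[xF Px] ->.
rewrite c3 // Px subD1set eqxx /= andbT.
by apply/existsP; exists F; rewrite FM subD1set.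
Qed.

Variable V1 : {set V}.

Definition nkfaces j i := #|[set s in kfaces M j | #|s :&: V1| == i]|.

Lemma sum_kfaces_meet j (g : nat -> nat) :
  \sum_(s in kfaces M j) g #|s :&: V1| = \sum_(i < j.+1) g i * nkfaces j i.
Proof.
apply: sum_fibres_ord => s sK; rewrite ltnS -(kfaces_card sK).
by apply: subset_leq_card; rewrite subsetIl.
Qed.

Lemma card_mixed_kfaces j :
  #|[set s in kfaces M j | mixed V1 s]| = \sum_(i < j.+1) (0 < i < j) * nkfaces j i.
Proof.
rewrite card_setId_sum.
transitivity (\sum_(s in kfaces M j) (0 < #|s :&: V1| < j : nat)).
  by apply: eq_bigr => s sK; rewrite (mixedE V1 (kfaces_card sK)).
exact: (sum_kfaces_meet j (fun i => 0 < i < j : nat)).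
Qed.

(* A tetrahedron with u vertices in V1 has u triangles with u - 1 vertices
   in V1 and 4 - u triangles with u. *)
Lemma double_count_triangles (i : nat) :
  2 * nkfaces 3 i = \sum_(u < 5)
    ((u : nat) * ((u : nat).-1 == i) + (4 - u) * ((u : nat) == i)) * nkfaces 4 u.
Proof.
set T3 := [set s in kfaces M 3 | #|s :&: V1| == i].
rewrite -(sum_kfaces_meet 4 (fun u => u * (u.-1 == i) + (4 - u) * (u == i))).
rewrite (kfaces_pure comb_3manifold_pure) mulnC -sum_nat_const.
transitivity (\sum_(t in T3) \sum_(F in M) (t \subset F : nat)).
  apply: eq_bigr => t /setIdP[tK _].
  by rewrite -(card_tetrahedra_on_triangle tK) (card_setId_sum M (fun F => t \subset F)).
rewrite exchange_big /=; apply: eq_bigr => F FM.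
rewrite -(card_setId_sum T3 (fun t => t \subset F)).
rewrite -(comb_3manifold_pure FM) -card_setD1I_eq.
have -> : [set t in T3 | t \subset F]
          = [set t in kfaces M 3 | (#|t :&: V1| == i) && (t \subset F)].
  by apply/setP => t; rewrite !inE andbA.
rewrite triangles_of_tetrahedron // card_in_imset // => x y /setIdP[xF _] /setIdP[yF _].
exact: setD1_inj_in.
Qed.

Lemma sum_vlink_euler_relation : V1 \subset vertices M ->
  \sum_(i < 3) i * nkfaces 2 i + \sum_(i < 5) i * nkfaces 4 i
  = 2 * #|V1| + \sum_(i < 4) i * nkfaces 3 i.
Proof.
move=> V1M; rewrite -!(sum_kfaces_meet _ id) -!sum_card_incident.
rewrite -big_split /= mulnC -sum_nat_const -big_split /=.
by apply: eq_bigr => v vV1; rewrite vlink_euler_relation ?(subsetP V1M).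
Qed.

Lemma slicing_eulerE : V1 \subset vertices M ->
  slicing_euler M V1 = (Posz (2 * #|V1|)%N - Posz (2 * nkfaces 2 2)%N
                        + Posz (nkfaces 4 3 + 2 * nkfaces 4 4)%N)%R.
Proof.
move=> V1M; have := sum_vlink_euler_relation V1M.
have := double_count_triangles 2; have := double_count_triangles 3.
rewrite /slicing_euler /sl_vertices /sl_edges /sl_faces.
rewrite -[in [set F in M | _]](kfaces_pure comb_3manifold_pure) !card_mixed_kfaces.
rewrite !big_ord_recl !big_ord0 /= /bump /= ?addn0 ?add1n.
lia.
Qed.

Lemma nkfaces_inside_le : nkfaces 2 2 <= 'C(#|V1|, 2).
Proof.
rewrite -cards_draws; apply: subset_leq_card; apply/subsetP => s.
rewrite !inE => /andP[/andP[/eqP cs _] /eqP csV1].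
rewrite cs eqxx andbT; apply/setIidPl/eqP.
by rewrite eqEcard subsetIl csV1 cs.
Qed.

Lemma slicing_euler_ge : V1 \subset vertices M ->
  (Posz (2 * #|V1|)%N - Posz (2 * 'C(#|V1|, 2))%N <= slicing_euler M V1)%R.
Proof. by move=> V1M; rewrite slicing_eulerE //; have := nkfaces_inside_le; lia. Qed.

End CombinatorialManifold.
End Manifold.

Lemma slicing_euler_setC (V : finType) (M : {set {set V}}) (V1 : {set V}) :
  slicing_euler M (~: V1) = slicing_euler M V1.
Proof.
have mixedC (X : {set {set V}}) : [set s in X | mixed (~: V1) s] = [set s in X | mixed V1 s].
  by apply/setP => s; rewrite !inE mixed_setC.
by rewrite /slicing_euler /sl_vertices /sl_edges /sl_faces !mixedC.
Qed.

Lemma slicing_genus_le (V : finType) (M : {set {set V}}) (V1 : {set V}) (c : nat) :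
  (Posz 2 - Posz (2 * c)%N <= slicing_euler M V1)%R -> (slicing_genus M V1 <= c%:R)%R.
Proof.
rewrite /slicing_genus ler_pdivrMr // -(ler_int rat) rmorphB /=.
set chi := ((slicing_euler M V1)%:~R : rat).
by rewrite -!pmulrn natrM => chi_ge; lra.
Qed.

Lemma slicing_genus_le_bin (V : finType) (M : {set {set V}}) (V1 : {set V}) (n : nat) :
  comb_3manifold M -> V1 \subset vertices M -> 0 < #|V1| <= n ->
  (slicing_genus M V1 <= ('C(n.-1, 2))%:R)%R.
Proof.
move=> manM V1M /andP[V1_gt0 V1_le_n]; apply: slicing_genus_le.
have := slicing_euler_ge manM V1M.
have : 'C(#|V1|.-1, 2) <= 'C(n.-1, 2) by apply: leq_bin2l; lia.
have : 'C(#|V1|, 2) = 'C(#|V1|.-1, 2) + #|V1|.-1.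
  by case: #|V1| V1_gt0 => // k _; rewrite binS bin1.
lia.
Qed.

Theorem proposition2p2 (V : finType) (M : {set {set V}}) (V1 : {set V}) (n : nat) :
  comb_3manifold M ->
  vertices M = [set: V] ->
  orientable M ->
  complex_connected M ->
  V1 != set0 -> V1 != [set: V] ->
  (#|V| = n.*2 \/ #|V| = n.*2.+1) ->
  slicing_connected M V1 ->
  (slicing_genus M V1 <= ('C(n.-1, 2))%:R)%R.
Proof.
move=> manM VM _ _ V1_neq0 V1_neqT cardV _.
have subVM (W : {set V}) : W \subset vertices M by rewrite VM subsetT.
have V1_gt0 : 0 < #|V1| by rewrite card_gt0.
have V1_ltV : #|V1| < #|V| by rewrite -cardsT; apply: proper_card; rewrite properT.
have [V1_le_n | n_lt_V1] := leqP #|V1| n.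
  by apply: slicing_genus_le_bin; rewrite ?V1_gt0.
rewrite /slicing_genus -slicing_euler_setC -/(slicing_genus M (~: V1)).
by apply: slicing_genus_le_bin; rewrite // cardsCs setCK; lia.
Qed.
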